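(* Let $n\geq3$ be odd. Let $\mathcal{Q}$ be the set of partitions $p$ of $\{1,\dots,n\}$ such that one block of $p$ has odd cardinality and all other blocks have cardinality $2$. For $p\in\mathcal{Q}$ let $\varepsilon''(p)=(-1)^{\frac12(|I|-1)}$, where $I$ is the odd block of $p$. Then $\sum_{p\in\mathcal{Q}}\varepsilon(p)\varepsilon''(p)=0$.
   Context: For an ordered partition $P=(I_1,\dots,I_k)$ of $\{1,\dots,n\}$ into nonempty blocks with $n_i=|I_i|$, $\sigma_P\in\mathfrak{S}_n$ is the unique permutation such that $\sigma_P^{-1}$ maps $\{n_1+\dots+n_i+1,\dots,n_1+\dots+n_{i+1}\}$ increasingly onto $I_{i+1}$, and $\varepsilon(P)=\mathrm{sgn}(\sigma_P)$. For a partition $p$ with at most one block of odd cardinality, $\varepsilon(P)$ does not depend on the ordering $P$ of the blocks of $p$, and this common value is $\varepsilon(p)$. *)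

(* The ground set {1,...,n} is modelled by 'I_n = {0,...,n-1}
   (order-preserving relabelling i |-> i+1). *)
From mathcomp Require Import all_boot all_order all_algebra all_fingroup.
Set Implicit Arguments. Unset Strict Implicit. Unset Printing Implicit Defensive.
Import GRing.Theory Num.Theory.
Local Open Scope ring_scope.

(* Position j
   (0-based) of this sequence is sigma_P^{-1}(j). *)
Definition ordpart_seq (n : nat) (P : seq {set 'I_n}) : seq 'I_n :=
  flatten [seq sort (fun x y : 'I_n => (x <= y)%N) (enum B) | B : {set 'I_n} <- P].

Definition sigmaP (n : nat) (P : seq {set 'I_n}) : option 'S_n :=
  [pick s : 'S_n | [forall j : 'I_n, (s^-1)%g j == nth j (ordpart_seq P) j]].

(* eps(P) = sgn(sigma_P) (as an integer); defaults to 1 if P is not an ordered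
   partition (never used in that case). *)
Definition epsP (n : nat) (P : seq {set 'I_n}) : int :=
  if sigmaP P is Some s then (-1) ^+ odd_perm s else 1.

(* eps(p) for an (unordered) partition p : the value of eps on an ordering of
   the blocks of p; we use the canonical enumeration order of the blocks.  For
   the partitions considered (at most one odd block) this is independent of
   the ordering, as stated in the paper. *)
Definition eps (n : nat) (p : {set {set 'I_n}}) : int := epsP (enum p).

Definition inQ (n : nat) (p : {set {set 'I_n}}) : bool :=
  partition p [set: 'I_n] &&
  [exists J in p, odd #|J| && [forall B in p, (B != J) ==> (#|B| == 2)%N]].

Definition eps2 (n : nat) (p : {set {set 'I_n}}) : int :=
  if [pick J in p | odd #|J|] is Some J then (-1) ^+ ((#|J|).-1./2) else 1.

(* A sign-reversing involution on Q.  If 1 and 2 lie in different blocks of p,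
   exchange them: this composes sigma_P with a transposition, so eps changes
   sign, while the block sizes, hence eps'', are unchanged.  If {1,2} is a
   block of p, merge it into the odd block I; if 1 and 2 both lie in I, split
   {1,2} off I.  Since 1 and 2 are the least elements, the increasing listing
   of I ∪ {1,2} is 1, 2 followed by that of I, so with suitably ordered blocks
   sigma_P does not change; as eps does not depend on the order of the blocks,
   eps is unchanged, whereas |I| changes by 2 and eps'' changes sign. *)

From mathcomp Require Import all_boot all_order all_algebra all_fingroup.
From mathcomp Require Import zify.
Set Implicit Arguments. Unset Strict Implicit. Unset Printing Implicit Defensive.
Import GRing.Theory Num.Theory.

Section SignReversingInvolution.
Local Open Scope ring_scope.

Lemma sum_sign_reversing_involution (R : numDomainType) (T : finType) (P : pred T)
    (f : T -> T) (F : T -> R) :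
  {in P, forall x, P (f x)} -> {in P, involutive f} -> {in P, forall x, F (f x) = - F x} ->
  \sum_(x | P x) F x = 0.
Proof.
move=> fP fK Ff; pose g x := if P x then f x else x.
have gK : involutive g.
  by move=> x; rewrite /g; case: (boolP (P x)) => Px; rewrite ?fP ?fK ?(negPf Px).
have gP x : P (g x) = P x.
  by rewrite /g; case: (boolP (P x)) => Px; [exact: (fP x Px) | exact: negbTE].
set S := \sum_(x | P x) F x.
have : S = - S.
  rewrite {1}/S (reindex_inj (inv_inj gK)) (eq_bigl _ _ gP) -sumrN /=.
  by apply: eq_bigr => x Px; rewrite /g Px Ff.
by move/eqP; rewrite -subr_eq0 opprK -mulr2n mulrn_eq0 => /eqP.
Qed.
End SignReversingInvolution.

Section Listing.
Variable n : nat.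
Implicit Types (L : seq 'I_n) (s : 'S_n).

Definition listing L := perm_eq L (enum 'I_n).

Definition listed_by L s := forall j : 'I_n, (s^-1)%g j = nth j L j.

Definition odd_listing L : bool :=
  if [pick s : 'S_n | [forall j : 'I_n, (s^-1)%g j == nth j L j]] is Some s
  then odd_perm s else false.

Lemma listing_perm L L' : listing L -> perm_eq L L' -> listing L'.
Proof. by move=> lL; rewrite perm_sym => /perm_trans; apply. Qed.

Lemma listing_uniq L : listing L -> uniq L.
Proof. by move/perm_uniq->; exact: enum_uniq. Qed.

Lemma listing_size L : listing L -> size L = n.
Proof. by move/perm_size; rewrite size_enum_ord. Qed.

Lemma listing_listed_by L : listing L -> exists s, listed_by L s.
Proof.
move=> lL; have sizeL := listing_size lL.
have inj : injective (fun j : 'I_n => nth j L j).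
  move=> i j /eqP; rewrite (set_nth_default i j) ?sizeL //.
  by rewrite nth_uniq ?sizeL ?listing_uniq // => /eqP /ord_inj.
by exists (perm inj)^-1%g => j; rewrite invgK permE.
Qed.

Lemma odd_listingE L s : listed_by L s -> odd_listing L = odd_perm s.
Proof.
rewrite /odd_listing => Ls; case: pickP => [s' /forallP Ls'|none].
  suff -> : s' = s by [].
  by apply: invg_inj; apply/permP => j; rewrite Ls; apply/eqP.
by have /forallP[] := negbT (none s) => j; rewrite Ls.
Qed.

Lemma odd_listing_tperm L a b : listing L -> a != b ->
  odd_listing (map (tperm a b) L) = ~~ odd_listing L.
Proof.
move=> lL ab; have [s Ls] := listing_listed_by lL.
have tLs : listed_by (map (tperm a b) L) (tperm a b * s)%g.
  by move=> j; rewrite invMg tpermV permM Ls (nth_map j) // listing_size.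
by rewrite (odd_listingE tLs) (odd_listingE Ls) odd_mul_tperm ab.
Qed.

(* In a listing, exchanging the values a and b is exchanging their positions. *)
Lemma odd_listing_swap X Y a b : listing (X ++ a :: b :: Y) ->
  odd_listing (X ++ b :: a :: Y) = ~~ odd_listing (X ++ a :: b :: Y).
Proof.
move=> lL; have := listing_uniq lL; rewrite cat_uniq /= !inE.
case/and5P=> _ /norP[aX /norP[bX _]] /norP[ab aY] bY _.
have fixed Z : a \notin Z -> b \notin Z -> map (tperm a b) Z = Z.
  move=> aZ bZ; apply: map_id_in => x xZ.
  by apply: tpermD; [apply: contraNneq aZ | apply: contraNneq bZ] => ->.
by rewrite -(odd_listing_tperm lL ab) map_cat /= tpermL tpermR !fixed.
Qed.

Lemma odd_listing_move X B c Y : listing (X ++ B ++ c :: Y) ->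
  odd_listing (X ++ c :: B ++ Y) = odd (size B) (+) odd_listing (X ++ B ++ c :: Y).
Proof.
elim: B X => [|b B IH] X lL //=.
have lL' : listing (X ++ b :: c :: B ++ Y).
  by apply: (listing_perm lL); rewrite perm_cat2l /= perm_cons (perm_catCA B [:: c]).
by rewrite odd_listing_swap // -cat_rcons IH cat_rcons // addNb.
Qed.

Lemma odd_listing_exchange X B C Y : listing (X ++ B ++ C ++ Y) ->
  odd_listing (X ++ C ++ B ++ Y) = odd (size B * size C) (+) odd_listing (X ++ B ++ C ++ Y).
Proof.
elim: C X => [|c C IH] X lL /=; first by rewrite muln0.
have lL' : listing (X ++ c :: B ++ C ++ Y).
  by apply: (listing_perm lL); rewrite perm_cat2l /= (perm_catCA B [:: c]).
rewrite -cat_rcons IH cat_rcons // odd_listing_move //.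
by rewrite mulnS oddD addbA [odd (size B) (+) _]addbC.
Qed.
End Listing.

Section OrderedPartitions.
Variable n : nat.
Implicit Types (A B : {set 'I_n}) (P X : seq {set 'I_n}).
Local Notation le_ord := (fun x y : 'I_n => x <= y).

Definition sorted_set B : seq 'I_n := sort le_ord (enum B).

Lemma ordpart_seq_cons B P : ordpart_seq (B :: P) = sorted_set B ++ ordpart_seq P.
Proof. by []. Qed.

Lemma ordpart_seq_cat P X : ordpart_seq (P ++ X) = ordpart_seq P ++ ordpart_seq X.
Proof. by rewrite /ordpart_seq map_cat flatten_cat. Qed.

Lemma size_sorted_set B : size (sorted_set B) = #|B|.
Proof. by rewrite size_sort cardE. Qed.

Lemma sorted_setE A s : sorted le_ord s -> uniq s -> A =i s -> sorted_set A = s.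
Proof.
move=> sorted_s uniq_s As.
apply: (sorted_eq (leT := le_ord)) => //; first exact: leq_trans.
- by move=> x y /anti_leq /ord_inj.
- by apply: sort_sorted => x y; exact: leq_total.
rewrite perm_sort; apply: uniq_perm; rewrite ?enum_uniq // => x.
by rewrite mem_enum.
Qed.

Lemma epsP_odd_listing P : epsP P = ((-1) ^+ odd_listing (ordpart_seq P))%R.
Proof. by rewrite /epsP /sigmaP /odd_listing; case: pickP. Qed.

Lemma listing_partition (p : {set {set 'I_n}}) :
  partition p setT -> listing (ordpart_seq (enum p)).
Proof.
move=> p_part.
have mem_p x : x \in ordpart_seq (enum p).
  apply/flatten_mapP.
  have : x \in cover p by rewrite (cover_partition p_part) inE.
  case/bigcupP => B Bp xB; exists B; first by rewrite mem_enum.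
  by rewrite mem_sort mem_enum.
have size_p : size (ordpart_seq (enum p)) = n.
  rewrite size_flatten /shape -map_comp sumnE big_map big_enum /=.
  under eq_bigr do rewrite size_sorted_set.
  by rewrite -(card_partition p_part) cardsT card_ord.
apply: uniq_perm; rewrite ?enum_uniq //; last by move=> x; rewrite mem_p mem_enum.
by apply: (@leq_size_uniq _ (enum 'I_n)); rewrite ?enum_uniq ?size_enum_ord ?size_p.
Qed.

Lemma size_ordpart_seq_even X : all (fun B => ~~ odd #|B|) X -> ~~ odd (size (ordpart_seq X)).
Proof.
elim: X => [|A X IH] //= /andP[evenA evenX].
by rewrite ordpart_seq_cons size_cat size_sorted_set oddD (negbTE evenA) IH.
Qed.

(* Moving a block past blocks of total size s changes the parity by s * #|B|,
   which is even when at most one block is odd. *)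
Lemma odd_listing_perm_blocks W P P' : perm_eq P P' ->
  count (fun B => odd #|B|) P <= 1 -> listing (W ++ ordpart_seq P) ->
  odd_listing (W ++ ordpart_seq P') = odd_listing (W ++ ordpart_seq P).
Proof.
elim: P' P W => [|B P' IH] P W pP; first by move: pP => /perm_size/size0nil->.
have BP : B \in P by rewrite (perm_mem pP) mem_head.
case/splitPr: BP pP => X Z pP.
have pXZ : perm_eq (X ++ Z) P'.
  rewrite -(perm_cons B); apply: perm_trans pP.
  by rewrite perm_sym (perm_catCA X [:: B] Z).
rewrite count_cat /= => oddP lP.
rewrite !ordpart_seq_cat !ordpart_seq_cons in lP *.
have lP' : listing ((W ++ sorted_set B) ++ ordpart_seq (X ++ Z)).
  by apply: (listing_perm lP); rewrite ordpart_seq_cat -!catA perm_cat2l perm_catCA.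
rewrite catA (IH _ _ pXZ _ lP'); last by apply: leq_trans oddP; rewrite count_cat leq_add2l leq_addl.
rewrite ordpart_seq_cat -!catA odd_listing_exchange // size_sorted_set.
suff -> : odd (size (ordpart_seq X) * #|B|) = false by [].
rewrite oddM; case oddB: (odd #|B|); rewrite ?andbF // andbT; apply/negbTE.
apply: size_ordpart_seq_even; apply/allP => C CX; apply/negP => oddC.
have : 0 < count (fun B => odd #|B|) X by rewrite -has_count; apply/hasP; exists C.
by move: oddP; rewrite oddB /= add1n addnS ltnS leqn0 addn_eq0 => /andP[/eqP->].
Qed.

Lemma epsP_perm_eq P P' : perm_eq P P' ->
  count (fun B => odd #|B|) P <= 1 -> listing (ordpart_seq P) -> epsP P' = epsP P.
Proof. by move=> pP oddP lP; rewrite !epsP_odd_listing (@odd_listing_perm_blocks [::] P). Qed.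
End OrderedPartitions.

Section PartitionSurgery.
Variables (T : finType) (p : {set {set T}}) (D : {set T}).
Hypothesis p_part : partition p D.
Implicit Types A B : {set T}.

Lemma partition_block_sub B : B \in p -> B \subset D.
Proof. by move=> Bp; rewrite -(cover_partition p_part); exact: bigcup_sup. Qed.

Lemma partition_block_neq0 B : B \in p -> B != set0.
Proof. by case/and3P: p_part => _ _ p0 Bp; apply: contraNneq p0 => <-. Qed.

Lemma partition_merge A B : A \in p -> B \in p -> A != B ->
  partition ((A :|: B) |: (p :\ A :\ B)) D.
Proof.
move=> Ap Bp AB.
have BpA : B \in p :\ A by rewrite !inE eq_sym AB.
have part := partitionD1 (partitionD1 p_part Ap) BpA.
have AB0 : A :|: B != set0 by rewrite setU_eq0 negb_and partition_block_neq0.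
have /(partitionU1 part AB0) : [disjoint A :|: B & D :\: A :\: B].
  by rewrite -setI_eq0; apply/eqP/setP => x; rewrite !inE; case: (x \in A); case: (x \in B).
congr partition; apply/setP => x; rewrite !inE.
have /subsetP AD := partition_block_sub Ap; have /subsetP BD := partition_block_sub Bp.
by case: (boolP (x \in A)) => [/AD|]; case: (boolP (x \in B)) => [/BD|] => //= ->.
Qed.

Lemma partition_split A B : B \in p -> A \subset B -> A != set0 -> A != B ->
  partition (A |: ((B :\: A) |: (p :\ B))) D.
Proof.
move=> Bp AB A0 AneB.
have BA0 : B :\: A != set0.
  by rewrite setD_eq0; apply: contra AneB => BA; rewrite eqEsubset AB.
have part := partitionD1 p_part Bp.
have /(partitionU1 part BA0) {}part : [disjoint B :\: A & D :\: B].
  by rewrite -setI_eq0; apply/eqP/setP => x; rewrite !inE; case: (x \in B); rewrite ?andbF.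
have /(partitionU1 part A0) : [disjoint A & B :\: A :|: D :\: B].
  rewrite -setI_eq0; apply/eqP/setP => x; rewrite !inE.
  by case: (boolP (x \in A)) => // /(subsetP AB) ->.
congr partition; apply/setP => x; rewrite !inE.
have /subsetP BD := partition_block_sub Bp.
by case: (boolP (x \in A)) => [/(subsetP AB)|]; case: (boolP (x \in B)) => [/BD|] => //= ->.
Qed.
End PartitionSurgery.

Lemma perm_enum_setU1 (T : finType) (x : T) (A : {set T}) :
  x \notin A -> perm_eq (enum (x |: A)) (x :: enum A).
Proof.
move=> xA; apply: uniq_perm; first exact: enum_uniq.
  by rewrite /= mem_enum xA enum_uniq.
by move=> y; rewrite !inE !mem_enum !inE.
Qed.

Lemma perm_enum_imset (T T' : finType) (f : T -> T') (A : {set T}) :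
  injective f -> perm_eq (enum (f @: A)) (map f (enum A)).
Proof.
move=> f_inj; apply: uniq_perm; rewrite ?enum_uniq ?(map_inj_uniq f_inj) ?enum_uniq //.
move=> y; rewrite mem_enum; apply/idP/idP => [/imsetP[x xA ->]|/mapP[x + ->]].
  by rewrite map_f ?mem_enum.
by rewrite mem_enum; exact: imset_f.
Qed.

Section OddBlock.
Variable n : nat.
Implicit Types (p : {set {set 'I_n}}) (A B J : {set 'I_n}).

Definition inQ_with p J :=
  [/\ partition p setT, J \in p, odd #|J| & {in p, forall B, B != J -> #|B| = 2}].

Lemma inQP p : reflect (exists J, inQ_with p J) (inQ p).
Proof.
apply: (iffP andP) => [[p_part /existsP[J /and3P[Jp oddJ /forallP pairs]]]|[J [p_part Jp oddJ pairs]]].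
  by exists J; split=> // B Bp BJ; apply/eqP; move: (pairs B); rewrite Bp BJ.
split=> //; apply/existsP; exists J; rewrite Jp oddJ; apply/forallP => B.
by apply/implyP => Bp; apply/implyP => BJ; rewrite pairs.
Qed.

Section Fixed.
Variables (p : {set {set 'I_n}}) (J : {set 'I_n}).
Hypothesis pJ : inQ_with p J.

Lemma inQ_with_odd B : B \in p -> odd #|B| -> B = J.
Proof.
case: pJ => _ _ _ pairs Bp oddB.
by apply/eqP; apply: contraLR oddB => /(pairs B Bp) ->.
Qed.

Lemma inQ_with_disjoint A B : A \in p -> B \in p -> A != B -> [disjoint A & B].
Proof. by case: pJ => /partition_trivIset /trivIsetP tI _ _ _; exact: tI. Qed.

Lemma pick_inQ_with : [pick B in p | odd #|B|] = Some J.
Proof.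
case: pickP => [B /andP[Bp oddB]|none]; first by rewrite (inQ_with_odd Bp oddB).
by case: pJ => _ Jp oddJ _; move: (none J); rewrite Jp oddJ.
Qed.

Lemma eps2_inQ_with : eps2 p = ((-1) ^+ (#|J|.-1./2))%R.
Proof. by rewrite /eps2 pick_inQ_with. Qed.

Lemma eps_inQ_with P : perm_eq (enum p) P -> eps p = epsP P.
Proof.
case: pJ => p_part Jp _ pairs pP; rewrite /eps (epsP_perm_eq pP) ?listing_partition //.
rewrite (@eq_in_count _ _ (pred1 J)) ?count_uniq_mem ?enum_uniq ?leq_b1 // => B.
rewrite mem_enum => Bp /=; case: (eqVneq B J) => [->|BJ]; first by case: pJ.
by rewrite pairs.
Qed.
End Fixed.
End OddBlock.

Lemma sorted_set_imset n (t : 'S_n) (B : {set 'I_n}) :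
  {in B &, {homo t : x y / x <= y}} -> sorted_set (t @: B) = map t (sorted_set B).
Proof.
move=> t_homo; apply: sorted_setE.
- rewrite sorted_map; apply: (@sub_in_sorted _ B _ _ t_homo).
    by apply/allP => x; rewrite mem_sort mem_enum.
  by apply: sort_sorted => x y; exact: leq_total.
- by rewrite (map_inj_uniq perm_inj) sort_uniq enum_uniq.
move=> y; apply/idP/idP => [/imsetP[x xB ->]|/mapP[x + ->]].
  by rewrite map_f // mem_sort mem_enum.
by rewrite mem_sort mem_enum; exact: imset_f.
Qed.

Section Relabel.
Variables (n : nat) (t : 'S_n).
Implicit Types (p : {set {set 'I_n}}) (B J : {set 'I_n}) (P : seq {set 'I_n}).

Definition relabel p := [set t @: (B : {set 'I_n}) | B in p].

Lemma inQ_with_relabel p J : inQ_with p J -> inQ_with (relabel p) (t @: J).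
Proof.
case=> p_part Jp oddJ pairs; split.
- have <- : t @: setT = setT.
    by apply/setP => x; rewrite inE -[x](permKV t) imset_f.
  by rewrite imset_partition //; exact: perm_inj.
- exact: imset_f.
- by rewrite card_imset //; exact: perm_inj.
move=> _ /imsetP[B Bp ->] tBJ; rewrite card_imset; last exact: perm_inj.
by apply: pairs => //; apply: contraNneq tBJ => ->.
Qed.

Lemma eps2_relabel p J : inQ_with p J -> eps2 (relabel p) = eps2 p.
Proof.
move=> pJ; rewrite (eps2_inQ_with (inQ_with_relabel pJ)) (eps2_inQ_with pJ).
by rewrite card_imset //; exact: perm_inj.
Qed.

Lemma ordpart_seq_relabel P : {in P, forall B, {in B &, {homo t : x y / x <= y}}} ->
  ordpart_seq [seq t @: B | B <- P] = map t (ordpart_seq P).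
Proof.
elim: P => [|B P IH] // t_homo.
rewrite map_cons !ordpart_seq_cons map_cat sorted_set_imset; last exact: t_homo (mem_head B P).
by congr (_ ++ _); apply: IH => C CP; apply: t_homo; rewrite inE CP orbT.
Qed.
End Relabel.

Lemma relabelK n (t : 'S_n) : cancel (relabel t) (relabel t^-1).
Proof.
move=> p; rewrite /relabel -imset_comp -[RHS]imset_id; apply: eq_imset => B /=.
by rewrite -imset_comp -[RHS]imset_id; apply: eq_imset => x /=; rewrite permK.
Qed.

Section Involution.
Variable m : nat.
Local Notation N := m.+2.
Implicit Types (p : {set {set 'I_N}}) (B J : {set 'I_N}).

Definition i0 : 'I_N := ord0.
Definition i1 : 'I_N := Ordinal (isT : 1 < N).
Definition pair01 : {set 'I_N} := [set i0; i1].
Definition swap01 : 'S_N := tperm i0 i1.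

Definition joins01 p := [exists B : {set 'I_N} in p, (i0 \in B) && (i1 \in B)].
Definition merge01 p J := (J :|: pair01) |: (p :\ J :\ pair01).
Definition split01 p J := pair01 |: ((J :\: pair01) |: (p :\ J)).

Lemma card_pair01 : #|pair01| = 2. Proof. by rewrite cards2. Qed.
Lemma i0_pair01 : i0 \in pair01. Proof. by rewrite !inE eqxx. Qed.
Lemma i1_pair01 : i1 \in pair01. Proof. by rewrite !inE eqxx orbT. Qed.

Lemma joins01P p : reflect (exists2 B, B \in p & pair01 \subset B) (joins01 p).
Proof.
rewrite /joins01; apply: (iffP existsP) => [[B /andP[Bp i01B]]|[B Bp pair01B]].
  by exists B; rewrite // subUset !sub1set.
by exists B; rewrite Bp -!sub1set -subUset.
Qed.

Lemma sorted_set_pair01 : sorted_set pair01 = [:: i0; i1].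
Proof. by apply: sorted_setE => // x; rewrite !inE. Qed.

Lemma sorted_set_setU_pair01 J : i0 \notin J -> i1 \notin J ->
  sorted_set (J :|: pair01) = i0 :: i1 :: sorted_set J.
Proof.
move=> i0J i1J; apply: sorted_setE.
- rewrite /= path_min_sorted; first by apply: sort_sorted => x y; exact: leq_total.
  apply/allP => x; rewrite mem_sort mem_enum => xJ.
  have : x != i0 by apply: contraNneq i0J => <-.
  have : x != i1 by apply: contraNneq i1J => <-.
  by rewrite -!val_eqE /=; lia.
- by rewrite /= !inE !mem_sort !mem_enum (negPf i0J) (negPf i1J) sort_uniq enum_uniq.
by move=> x; rewrite !inE mem_sort mem_enum; case: (x \in J); rewrite ?orbT ?orbF.
Qed.

Section Merge.
Variables (p : {set {set 'I_N}}) (J : {set 'I_N}).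
Hypotheses (pJ : inQ_with p J) (pair01p : pair01 \in p).

Let Jp : J \in p. Proof. by case: pJ. Qed.
Let oddJ : odd #|J|. Proof. by case: pJ. Qed.

Let J_neq_pair01 : J != pair01.
Proof. by apply: contraTneq oddJ => ->; rewrite card_pair01. Qed.

Let J_pair01_disjoint : [disjoint J & pair01].
Proof. exact: (inQ_with_disjoint pJ Jp pair01p J_neq_pair01). Qed.

Let i0J : i0 \notin J. Proof. by rewrite (disjointFl J_pair01_disjoint i0_pair01). Qed.
Let i1J : i1 \notin J. Proof. by rewrite (disjointFl J_pair01_disjoint i1_pair01). Qed.

Let card_merged : #|J :|: pair01| = #|J| + 2.
Proof. by apply/eqP; rewrite -card_pair01 (leq_card_setU J pair01).2. Qed.

Let merged_notin : J :|: pair01 \notin p.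
Proof.
apply: contraNN i0J => /(inQ_with_odd pJ) <-; last by rewrite card_merged addn2 /= negbK.
by rewrite inE i0_pair01 orbT.
Qed.

Lemma inQ_with_merge01 : inQ_with (merge01 p J) (J :|: pair01).
Proof.
case: pJ => p_part _ _ pairs; split.
- exact: (partition_merge p_part Jp pair01p J_neq_pair01).
- exact: setU11.
- by rewrite card_merged addn2 /= negbK.
by move=> B; rewrite !inE => /orP[->//|/and3P[_ BJ Bp]] _; exact: pairs.
Qed.

Lemma pair01_notin_merge01 : pair01 \notin merge01 p J.
Proof.
rewrite !inE eqxx /= orbF; apply: contraTneq oddJ => /(congr1 (fun B => #|B|)) /eqP.
by rewrite card_merged card_pair01 -{1}[2]add0n eqn_add2r => /eqP <-.
Qed.

Lemma split01_merge01 : split01 (merge01 p J) (J :|: pair01) = p.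
Proof.
rewrite /split01 /merge01 setU1K; last by apply: contra merged_notin => /setD1P[_ /setD1P[]].
rewrite setDUl setDv setU0 (setDidPl J_pair01_disjoint) setUCA setD1K ?setD1K //.
by rewrite !inE eq_sym J_neq_pair01.
Qed.

Lemma eps_merge01 : eps (merge01 p J) = eps p.
Proof.
set R := enum (p :\ J :\ pair01).
have perm_p : perm_eq (enum p) (pair01 :: J :: R).
  apply: uniq_perm; rewrite ?enum_uniq //=.
    by rewrite !inE negb_or eq_sym J_neq_pair01 !mem_enum !inE !eqxx andbF enum_uniq.
  move=> B; rewrite !inE !mem_enum !inE.
  by case: (eqVneq B pair01) => [->|] //=; case: (eqVneq B J) => [->|].
have perm_q : perm_eq (enum (merge01 p J)) ((J :|: pair01) :: R).
  by apply: perm_enum_setU1; apply: contra merged_notin => /setD1P[_ /setD1P[]].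
rewrite (eps_inQ_with inQ_with_merge01 perm_q) (eps_inQ_with pJ perm_p).
by rewrite !epsP_odd_listing !ordpart_seq_cons sorted_set_setU_pair01 ?sorted_set_pair01.
Qed.

Lemma eps2_merge01 : eps2 (merge01 p J) = (- eps2 p)%R.
Proof.
rewrite (eps2_inQ_with inQ_with_merge01) (eps2_inQ_with pJ) card_merged.
by case: #|J| oddJ => // k _; rewrite addn2 exprS mulN1r.
Qed.
End Merge.

Section Split.
Variables (p : {set {set 'I_N}}) (J : {set 'I_N}).
Hypotheses (pJ : inQ_with p J) (pair01J : pair01 \subset J).

Let Jp : J \in p. Proof. by case: pJ. Qed.
Let oddJ : odd #|J|. Proof. by case: pJ. Qed.

Let pair01_neq_J : pair01 != J.
Proof. by apply: contraTneq oddJ => <-; rewrite card_pair01. Qed.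

Let card_split : #|J :\: pair01| = #|J| - 2.
Proof. by rewrite cardsD (setIidPr pair01J) card_pair01. Qed.

Let odd_split : odd #|J :\: pair01|.
Proof.
have := subset_leq_card pair01J; rewrite card_pair01 => J_ge2.
by rewrite card_split oddB // addbF.
Qed.

Let split_neq_J : J :\: pair01 != J.
Proof. by apply/eqP => /setP/(_ i0); rewrite inE i0_pair01 (subsetP pair01J _ i0_pair01). Qed.

Lemma inQ_with_split01 : inQ_with (split01 p J) (J :\: pair01).
Proof.
case: pJ => p_part _ _ pairs; split => //.
- apply: partition_split => //; apply/set0Pn; exists i0; exact: i0_pair01.
- by rewrite !inE eqxx orbT.
move=> B; rewrite !inE => /or3P[/eqP-> _|/eqP->|/andP[BJ Bp] _].
- exact: card_pair01.
- by rewrite eqxx.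
- exact: pairs.
Qed.

Lemma pair01_in_split01 : pair01 \in split01 p J.
Proof. exact: setU11. Qed.

Lemma merge01_split01 : merge01 (split01 p J) (J :\: pair01) = p.
Proof.
have pair01_notin : pair01 \notin p :\ J.
  apply/negP => /setD1P[_ pair01p].
  have := inQ_with_disjoint pJ pair01p Jp pair01_neq_J.
  by move/disjointFr/(_ i0_pair01); rewrite (subsetP pair01J _ i0_pair01).
have split_notin : J :\: pair01 \notin pair01 |: (p :\ J).
  rewrite !inE negb_or negb_and negbK; apply/andP; split.
    by apply/eqP => /setP/(_ i0); rewrite in_setD i0_pair01.
  apply/orP; right; apply: contra split_neq_J => /(inQ_with_odd pJ)/(_ odd_split) ->; exact: eqxx.
have JK : J :\: pair01 :|: pair01 = J.
  by rewrite setUC -{2}(setID J pair01) (setIidPr pair01J).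
by rewrite /merge01 /split01 setUCA !setU1K // JK setD1K.
Qed.
End Split.

Lemma mem_swap01 x B : (x \in swap01 @: B) = (swap01 x \in B).
Proof. by rewrite -{1}[x](tpermK i0 i1) mem_imset //; exact: perm_inj. Qed.

Lemma joins01_relabel p : joins01 (relabel swap01 p) = joins01 p.
Proof.
apply/existsP/existsP => -[B /andP[Bp i01B]].
  case/imsetP: Bp i01B => C Cp ->; rewrite !mem_swap01 tpermL tpermR andbC => i01C.
  by exists C; rewrite Cp.
case/andP: i01B => i0B i1B.
exists (swap01 @: B); rewrite !mem_swap01 tpermL tpermR i0B i1B !andbT.
by apply: (imset_f (fun C : {set 'I_N} => swap01 @: C)).
Qed.

Lemma relabel_swap01K : involutive (relabel swap01).
Proof. by move=> p; rewrite -{1}(tpermV i0 i1 : swap01^-1 = swap01)%g relabelK. Qed.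

Lemma nat_of_swap01 x : nat_of_ord (swap01 x) =
  if nat_of_ord x == 0 then 1 else if nat_of_ord x == 1 then 0 else nat_of_ord x.
Proof.
case: tpermP => [->|->|/eqP x0 /eqP x1] //.
by rewrite -!val_eqE /= in x0 x1; rewrite (negPf x0) (negPf x1).
Qed.

Lemma swap01_homo B : ~~ ((i0 \in B) && (i1 \in B)) -> {in B &, {homo swap01 : x y / x <= y}}.
Proof.
move=> not01 x y xB yB; rewrite !nat_of_swap01.
have : ~~ ((nat_of_ord x == 0) && (nat_of_ord y == 1)).
  apply: contra not01 => /andP[/eqP x0 /eqP y1].
  have -> : i0 = x by apply: val_inj; rewrite /= x0.
  have -> : i1 = y by apply: val_inj; rewrite /= y1.
  by rewrite xB yB.
by case: (nat_of_ord x =P 0) => ?; case: (nat_of_ord x =P 1) => ?;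
  case: (nat_of_ord y =P 0) => ?; case: (nat_of_ord y =P 1) => ? /=; lia.
Qed.

Lemma eps_relabel_swap01 p J : inQ_with p J -> ~~ joins01 p -> eps (relabel swap01 p) = (- eps p)%R.
Proof.
move=> pJ no01.
have perm_q : perm_eq (enum (relabel swap01 p)) [seq swap01 @: B | B <- enum p].
  by apply: perm_enum_imset; exact: imset_inj perm_inj.
rewrite (eps_inQ_with (inQ_with_relabel _ pJ) perm_q) epsP_odd_listing ordpart_seq_relabel.
  rewrite odd_listing_tperm ?listing_partition //; last by case: pJ.
  by rewrite /eps epsP_odd_listing; case: odd_listing; rewrite ?expr1 ?expr0 ?opprK.
move=> B; rewrite mem_enum => Bp; apply: swap01_homo; apply: contra no01 => i01B.
by apply/existsP; exists B; rewrite Bp.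
Qed.

Lemma pair01_subset_inQ_with p J : inQ_with p J -> joins01 p -> pair01 \notin p ->
  pair01 \subset J.
Proof.
case=> _ _ _ pairs /joins01P[B Bp pair01B] pair01p.
have [<- //|BJ] := eqVneq B J.
have /eqP pair01E : pair01 == B by rewrite eqEcard pair01B card_pair01 pairs.
by rewrite pair01E Bp in pair01p.
Qed.

Definition flip p :=
  if joins01 p then
    if [pick J in p | odd #|J|] is Some J then
      if pair01 \in p then merge01 p J else split01 p J
    else p
  else relabel swap01 p.

Lemma flipP p : inQ p ->
  [/\ inQ (flip p), flip (flip p) = p & (eps (flip p) * eps2 (flip p) = - (eps p * eps2 p))%R].
Proof.
case/inQP => J pJ; rewrite /flip; case: ifP => [joins|/negbT disjoint01]; last first.
  rewrite joins01_relabel (negbTE disjoint01) relabel_swap01K (eps_relabel_swap01 pJ) //.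
  rewrite (eps2_relabel _ pJ) mulNr; split=> //; apply/inQP.
  by exists (swap01 @: J); exact: inQ_with_relabel.
rewrite (pick_inQ_with pJ); case: ifP => [pair01p|/negbT pair01Np].
  have qJ := inQ_with_merge01 pJ pair01p.
  have joins_q : joins01 (merge01 p J) by apply/joins01P; exists (J :|: pair01); rewrite ?setU11 ?subsetUr.
  rewrite joins_q (pick_inQ_with qJ) (negbTE (pair01_notin_merge01 pJ pair01p)).
  rewrite split01_merge01 // eps_merge01 // eps2_merge01 // mulrN; split=> //.
  by apply/inQP; exists (J :|: pair01).
have pair01J := pair01_subset_inQ_with pJ joins pair01Np.
have qJ := inQ_with_split01 pJ pair01J.
have pair01q := pair01_in_split01 p J.
have joins_q : joins01 (split01 p J) by apply/joins01P; exists pair01.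
rewrite joins_q (pick_inQ_with qJ) pair01q merge01_split01 //; split=> //; last first.
  have := eps_merge01 qJ pair01q; have := eps2_merge01 qJ pair01q.
  by rewrite merge01_split01 // => -> ->; rewrite mulrN opprK.
by apply/inQP; exists (J :\: pair01).
Qed.
End Involution.

Local Open Scope ring_scope.

(* [hodd] is unused: the involution argument works for every n >= 2. *)
Theorem mainTheorem11 (n : nat) (hn3 : (3 <= n)%N) (hodd : odd n) :
  \sum_(p : {set {set 'I_n}} | inQ p) eps p * eps2 p = 0 :> int.
Proof.
case: n hn3 hodd => [|[|m]] // _ _.
by apply: (sum_sign_reversing_involution (f := @flip m)) => p /flipP[].
Qed.
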